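(* Let $n\ge2$, let $P$ be a partial $n$-Metric on a set $X$, and let $\{x_i\}_{i\in\mathbb{N}}$, $\{y_i\}_{i\in\mathbb{N}}$ be sequences in $X$ forming a Cauchy pair with central distance $r$. Then $\{x_i\}$ and $\{y_i\}$ are both Cauchy sequences with central distance $r$. Moreover, if $a$ is a limit (respectively, a special limit) of $\{x_i\}$, then $a$ is a limit (respectively, a special limit) of $\{y_i\}$.
   Context: Notation: $\langle a\rangle^k$ denotes the $k$-tuple $(a,\dots,a)$ inserted into an argument list. A partial $n$-Metric on $X$ is a function $P:X^n\to\mathbb{R}$ such that for all $x_1,\dots,x_n,a\in X$: (1) $P(\langle x_1\rangle^n)\le P(\langle x_1\rangle^{n-1},x_2)$; (2) $P$ is invariant under permutations of its arguments; (3) $P(\langle x_1\rangle^{n-1},x_2)=P(\langle x_1\rangle^n)$ and $P(\langle x_2\rangle^{n-1},x_1)=P(\langle x_2\rangle^n)$ iff $x_1=x_2$; (4) $P(x_1,\dots,x_n)\le P(x_1,\dots,x_{n-1},a)+P(\langle a\rangle^{n-1},x_n)-P(\langle a\rangle^n)$. Two sequences $\{x_i\},\{y_i\}$ form a Cauchy pair with central distance $r\in\mathbb{R}$ if for every $\epsilon>0$ there is $N$ such that for all $i,j>N$: $r-\epsilon<\min\{P(\langle x_i\rangle^n),P(\langle y_i\rangle^n)\}\le P(\langle x_i\rangle^{n-1},y_j)<r+\epsilon$. A sequence is Cauchy with central distance $r$ if for every $\epsilon>0$ there is $N$ with $|P(x_{i_1},\dots,x_{i_n})-r|<\epsilon$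 for all $i_1,\dots,i_n>N$. A point $a$ is a limit of $\{x_i\}$ iff for every $\epsilon>0$ there is $N$ with $P(\langle a\rangle^{n-1},x_i)-P(\langle a\rangle^n)<\epsilon$ for all $i>N$; a special limit of a Cauchy sequence with central distance $r$ is a limit $a$ with $P(\langle a\rangle^n)=r$. *)

From Stdlib Require Import Reals List Permutation.
Open Scope R_scope.

(* A function P : X^n -> R is represented as P : list X -> R, only ever
   evaluated on lists of length n. <a>^k is [repeat a k]. *)

Definition partial_nMetric {X : Type} (n : nat) (P : list X -> R) : Prop :=
  (forall x1 x2 : X,
      P (repeat x1 n) <= P (repeat x1 (n - 1) ++ x2 :: nil)) /\
  (forall l l' : list X, length l = n -> Permutation l l' -> P l = P l') /\
  (forall x1 x2 : X,
      (P (repeat x1 (n - 1) ++ x2 :: nil) = P (repeat x1 n) /\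
       P (repeat x2 (n - 1) ++ x1 :: nil) = P (repeat x2 n)) <-> x1 = x2) /\
  (forall (l : list X) (xn a : X), length l = (n - 1)%nat ->
      P (l ++ xn :: nil) <=
      P (l ++ a :: nil) + P (repeat a (n - 1) ++ xn :: nil) - P (repeat a n)).

Definition cauchy_pair {X : Type} (n : nat) (P : list X -> R)
    (x y : nat -> X) (r : R) : Prop :=
  forall eps : R, eps > 0 -> exists N : nat, forall i j : nat,
    (i > N)%nat -> (j > N)%nat ->
    r - eps < Rmin (P (repeat (x i) n)) (P (repeat (y i) n)) /\
    Rmin (P (repeat (x i) n)) (P (repeat (y i) n))
      <= P (repeat (x i) (n - 1) ++ y j :: nil) /\
    P (repeat (x i) (n - 1) ++ y j :: nil) < r + eps.

(* Cauchy sequence with central distance r: for indices i_1..i_n > N,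
   given as f 0, ..., f (n-1). *)
Definition cauchy_seq {X : Type} (n : nat) (P : list X -> R)
    (x : nat -> X) (r : R) : Prop :=
  forall eps : R, eps > 0 -> exists N : nat, forall f : nat -> nat,
    (forall k, (k < n)%nat -> (f k > N)%nat) ->
    Rabs (P (map (fun k => x (f k)) (seq 0 n)) - r) < eps.

Definition is_limit {X : Type} (n : nat) (P : list X -> R)
    (x : nat -> X) (a : X) : Prop :=
  forall eps : R, eps > 0 -> exists N : nat, forall i : nat, (i > N)%nat ->
    P (repeat a (n - 1) ++ x i :: nil) - P (repeat a n) < eps.

Definition is_special_limit {X : Type} (n : nat) (P : list X -> R)
    (x : nat -> X) (r : R) (a : X) : Prop :=
  is_limit n P x a /\ P (repeat a n) = r.

(* Write [excess a b] for [P(a,...,a,b) - P(a,...,a)], the analogue of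
   [p(a,b) - p(a,a)] for partial metrics. Axioms (1) and (4) make it a
   nonnegative quasi-distance satisfying the triangle inequality, and (2) with
   (4) show that replacing one argument [a] of [P] by [b] raises [P] by at most
   [excess a b]. Swapping arguments one at a time then compares [P] on any
   n-tuple with [P] on a constant tuple. For a Cauchy pair, the defining
   inequalities give [excess (x i) (y j)] small and, via the comparison,
   [excess (y j) (x i)] small as well, with all diagonal values close to [r];
   the triangle inequality through a fixed [y m] (resp. [x m]) then makes each
   sequence Cauchy on its own, and through [x j] transfers limits from [x] to
   [y]. *)
From Stdlib Require Import Reals List Permutation.
From Stdlib Require Import Lia Lra.
Open Scope R_scope.

Section ExcessOfPartialMetric.

Variables (X : Type) (n : nat) (P : list X -> R).
Hypothesis n_gt0 : (0 < n)%nat.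
Hypothesis HP : partial_nMetric n P.

Definition excess (a b : X) : R :=
  P (repeat a (n - 1) ++ b :: nil) - P (repeat a n).

Lemma excess_ge0 (a b : X) : 0 <= excess a b.
Proof. destruct HP as [Hdiag _]. unfold excess. specialize (Hdiag a b). lra. Qed.

Lemma excess_triangle (a b c : X) : excess a c <= excess a b + excess b c.
Proof.
  destruct HP as [_ [_ [_ Htri]]]. unfold excess.
  specialize (Htri (repeat a (n - 1)) c b (repeat_length _ _)). lra.
Qed.

Lemma P_replace_le (u v : list X) (a b : X) :
  (length u + length v = n - 1)%nat ->
  P (u ++ b :: v) <= P (u ++ a :: v) + excess a b.
Proof.
  intros Hlen. destruct HP as [_ [Hperm [_ Htri]]].
  assert (Hlast : forall z, P (u ++ z :: v) = P ((u ++ v) ++ z :: nil)).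
  { intros z. apply Hperm.
    - rewrite length_app; simpl; lia.
    - eapply Permutation_trans.
      + apply Permutation_sym, Permutation_middle.
      + apply Permutation_cons_append. }
  rewrite !Hlast. unfold excess.
  specialize (Htri (u ++ v) b a). rewrite length_app in Htri.
  specialize (Htri Hlen). lra.
Qed.

Lemma repeat_app_cons (m : X) (k : nat) (u : list X) :
  repeat m k ++ m :: u = repeat m (S k) ++ u.
Proof. induction k as [|k IH]; simpl; [reflexivity | now rewrite IH]. Qed.

Lemma P_repeat_app_le (m : X) (D : R) (u : list X) (k : nat) :
  (k + length u = n)%nat -> Forall (fun s => excess m s <= D) u ->
  P (repeat m k ++ u) <= P (repeat m n) + INR (length u) * D.
Proof.
  revert k. induction u as [|s u IH]; intros k Hlen Hu.
  - simpl in *. rewrite app_nil_r. replace k with n by lia. lra.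
  - inversion Hu as [|? ? Hs Hu']; subst. simpl in Hlen. simpl length. rewrite S_INR.
    pose proof (P_replace_le (repeat m k) u m s) as Hrepl.
    rewrite repeat_length, repeat_app_cons in Hrepl.
    specialize (Hrepl ltac:(lia)).
    specialize (IH (S k) ltac:(lia) Hu'). lra.
Qed.

Lemma P_repeat_app_ge (m : X) (D : R) (u : list X) (k : nat) :
  (k + length u = n)%nat -> Forall (fun s => excess s m <= D) u ->
  P (repeat m n) <= P (repeat m k ++ u) + INR (length u) * D.
Proof.
  revert k. induction u as [|s u IH]; intros k Hlen Hu.
  - simpl in *. rewrite app_nil_r. replace k with n by lia. lra.
  - inversion Hu as [|? ? Hs Hu']; subst. simpl in Hlen. simpl length. rewrite S_INR.
    pose proof (P_replace_le (repeat m k) u s m) as Hrepl.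
    rewrite repeat_length, repeat_app_cons in Hrepl.
    specialize (Hrepl ltac:(lia)).
    specialize (IH (S k) ltac:(lia) Hu'). lra.
Qed.

Lemma P_near_repeat (m : X) (D : R) (u : list X) :
  length u = n ->
  (forall s, In s u -> excess m s <= D /\ excess s m <= D) ->
  Rabs (P u - P (repeat m n)) <= INR n * D.
Proof.
  intros Hlen Hu.
  pose proof (P_repeat_app_le m D u 0 ltac:(lia)) as Hle.
  pose proof (P_repeat_app_ge m D u 0 ltac:(lia)) as Hge.
  simpl in Hle, Hge. rewrite Hlen in Hle, Hge.
  apply Rabs_le. split.
  - enough (P (repeat m n) <= P u + INR n * D) by lra.
    apply Hge, Forall_forall. intros s Hs. apply (Hu s Hs).
  - enough (P u <= P (repeat m n) + INR n * D) by lra.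
    apply Hle, Forall_forall. intros s Hs. apply (Hu s Hs).
Qed.

Lemma P_reverse_le (a b : X) :
  P (repeat b (n - 1) ++ a :: nil) <= P (repeat a n) + INR n * excess a b.
Proof.
  destruct HP as [_ [Hperm _]].
  rewrite (Hperm _ (repeat a 1 ++ repeat b (n - 1))).
  - eapply Rle_trans.
    + apply (P_repeat_app_le a (excess a b) (repeat b (n - 1)) 1).
      * rewrite repeat_length; lia.
      * apply Forall_forall. intros s Hs. apply repeat_spec in Hs. subst. lra.
    + rewrite repeat_length. apply Rplus_le_compat_l, Rmult_le_compat_r.
      * apply excess_ge0.
      * apply le_INR. lia.
  - rewrite length_app, repeat_length. simpl. lia.
  - simpl. apply Permutation_sym, Permutation_cons_append.
Qed.

Lemma excess_bounds (r e : R) (a b : X) :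
  r - e < P (repeat a n) -> r - e < P (repeat b n) ->
  P (repeat a (n - 1) ++ b :: nil) < r + e ->
  excess a b < 2 * e /\ excess b a < (2 * INR n + 2) * e /\
  Rabs (P (repeat a n) - r) < e /\
  Rabs (P (repeat b n) - r) < (2 * INR n + 1) * e.
Proof.
  intros Ha Hb Hab.
  pose proof (excess_ge0 a b) as Hab0. pose proof (excess_ge0 b a) as Hba0.
  pose proof (P_reverse_le a b) as Hrev. pose proof (pos_INR n) as Hn0.
  unfold excess in *.
  assert (Hsmall : INR n * (P (repeat a (n - 1) ++ b :: nil) - P (repeat a n))
                   <= INR n * (2 * e)) by (apply Rmult_le_compat_l; lra).
  assert (Hne : 0 <= INR n * e) by (apply Rmult_le_pos; lra).
  repeat split; try apply Rabs_def1; lra.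
Qed.

Definition mutually_close (z w : nat -> X) (r : R) : Prop :=
  forall e, e > 0 -> exists N : nat, forall i j, (i > N)%nat -> (j > N)%nat ->
    excess (z i) (w j) < e /\ excess (w j) (z i) < e /\
    Rabs (P (repeat (z i) n) - r) < e /\ Rabs (P (repeat (w j) n) - r) < e.

Definition excess_cauchy (z : nat -> X) (r : R) : Prop :=
  forall e, e > 0 -> exists N : nat, forall i j, (i > N)%nat -> (j > N)%nat ->
    excess (z i) (z j) < e /\ Rabs (P (repeat (z i) n) - r) < e.

Lemma cauchy_pair_mutually_close (x y : nat -> X) (r : R) :
  cauchy_pair n P x y r -> mutually_close x y r.
Proof.
  intros Hpair e He.
  pose proof (pos_INR n) as Hn0.
  set (e' := e / (2 * INR n + 2)).
  assert (He' : 0 < e') by (unfold e'; apply Rdiv_lt_0_compat; lra).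
  assert (Hscale : (2 * INR n + 2) * e' = e) by (unfold e'; field; lra).
  destruct (Hpair e' He') as [N HN]. exists N. intros i j Hi Hj.
  destruct (HN i j Hi Hj) as [Hmin_i [_ Hxy]].
  destruct (HN j j Hj Hj) as [Hmin_j _].
  pose proof (Rmin_l (P (repeat (x i) n)) (P (repeat (y i) n))).
  pose proof (Rmin_r (P (repeat (x j) n)) (P (repeat (y j) n))).
  destruct (excess_bounds r e' (x i) (y j)) as [H1 [H2 [H3 H4]]]; try lra.
  repeat split; nra.
Qed.

Lemma mutually_close_sym (z w : nat -> X) (r : R) :
  mutually_close z w r -> mutually_close w z r.
Proof.
  intros Hzw e He. destruct (Hzw e He) as [N HN]. exists N.
  intros i j Hi Hj. destruct (HN j i Hj Hi) as [H1 [H2 [H3 H4]]]. auto.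
Qed.

Lemma excess_cauchy_of_mutually_close (z w : nat -> X) (r : R) :
  mutually_close z w r -> excess_cauchy z r.
Proof.
  intros Hzw e He. destruct (Hzw (e / 2) ltac:(lra)) as [N HN]. exists N.
  intros i j Hi Hj.
  destruct (HN i (S N) Hi ltac:(lia)) as [Hzi_w [_ [Hzi _]]].
  destruct (HN j (S N) Hj ltac:(lia)) as [_ [Hw_zj _]].
  pose proof (excess_triangle (z i) (w (S N)) (z j)). split; lra.
Qed.

Lemma cauchy_seq_of_excess_cauchy (z : nat -> X) (r : R) :
  excess_cauchy z r -> cauchy_seq n P z r.
Proof.
  intros Hz eps Heps. pose proof (pos_INR n) as Hn0.
  set (e := eps / (INR n + 1)).
  assert (He : 0 < e) by (unfold e; apply Rdiv_lt_0_compat; lra).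
  assert (Hscale : (INR n + 1) * e = eps) by (unfold e; field; lra).
  destruct (Hz e He) as [N HN]. exists N. intros f Hf.
  set (u := map (fun k => z (f k)) (seq 0 n)).
  assert (Hnear : Rabs (P u - P (repeat (z (S N)) n)) <= INR n * e).
  { apply P_near_repeat.
    - unfold u. now rewrite length_map, length_seq.
    - intros s Hs. unfold u in Hs. apply in_map_iff in Hs as [k [<- Hk]].
      apply in_seq in Hk. assert (Hfk : (f k > N)%nat) by (apply Hf; lia).
      split; left; apply HN; lia. }
  destruct (HN (S N) (S N) ltac:(lia) ltac:(lia)) as [_ Hdiag].
  pose proof (Rabs_triang (P u - P (repeat (z (S N)) n))
                          (P (repeat (z (S N)) n) - r)) as Htri.
  replace (P u - P (repeat (z (S N)) n) + (P (repeat (z (S N)) n) - r))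
    with (P u - r) in Htri by ring.
  fold u. lra.
Qed.

Lemma is_limit_of_mutually_close (z w : nat -> X) (r : R) (a : X) :
  mutually_close z w r -> is_limit n P z a -> is_limit n P w a.
Proof.
  intros Hzw Ha eps Heps.
  destruct (Hzw (eps / 2) ltac:(lra)) as [N HN].
  destruct (Ha (eps / 2) ltac:(lra)) as [Na HNa].
  exists N. intros i Hi.
  set (j := S (Nat.max N Na)).
  destruct (HN j i ltac:(lia) Hi) as [Hzw_ji _].
  specialize (HNa j ltac:(lia)).
  pose proof (excess_triangle a (z j) (w i)).
  unfold excess in *. lra.
Qed.

End ExcessOfPartialMetric.

Theorem lemma4p19 (X : Type) (n : nat) (P : list X -> R)
    (x y : nat -> X) (r : R) :
  (2 <= n)%nat ->
  partial_nMetric n P ->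
  cauchy_pair n P x y r ->
  cauchy_seq n P x r /\ cauchy_seq n P y r /\
  (forall a : X, is_limit n P x a -> is_limit n P y a) /\
  (forall a : X, is_special_limit n P x r a -> is_special_limit n P y r a).
Proof.
  intros Hn HP Hpair.
  assert (Hn0 : (0 < n)%nat) by lia.
  pose proof (cauchy_pair_mutually_close X n P Hn0 HP x y r Hpair) as Hxy.
  pose proof (mutually_close_sym X n P x y r Hxy) as Hyx.
  assert (Hlim : forall a, is_limit n P x a -> is_limit n P y a)
    by (intros a; exact (is_limit_of_mutually_close X n P Hn0 HP x y r a Hxy)).
  split; [|split; [|split]].
  - exact (cauchy_seq_of_excess_cauchy X n P Hn0 HP x r
             (excess_cauchy_of_mutually_close X n P Hn0 HP x y r Hxy)).
  - exact (cauchy_seq_of_excess_cauchy X n P Hn0 HP y r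
             (excess_cauchy_of_mutually_close X n P Hn0 HP y x r Hyx)).
  - exact Hlim.
  - intros a [Ha Hr]. split; [exact (Hlim a Ha) | exact Hr].
Qed.
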